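(* Let $\mathbf w\in\mathbb R^m$. The positional voting method $B_{\mathbf w}$ is Pareto efficient if and only if $\mathbf w$ is strictly decreasing, i.e. $\mathbf w(1)>\mathbf w(2)>\cdots>\mathbf w(m)$.
   Context: Fix an integer $n\ge 2$ and a set $\mathbf C$ of $n$ candidates. Fix a composition $\lambda=(\lambda_1,\dots,\lambda_m)$ of $n$ (positive integers with $\sum_i\lambda_i=n$), write $[m]=\{1,\dots,m\}$. A ballot is a function $b:\mathbf C\to[m]$ with $|b^{-1}(i)|=\lambda_i$ for every $i$; $\mathbf C_\lambda$ denotes the set of ballots. The profile space is $P=\mathbb R^{\mathbf C_\lambda}$ with basis $\{\delta_b\}$ (indicator functions) and inner product $\mathbf p\cdot\mathbf q=\sum_b\mathbf p(b)\mathbf q(b)$. For $\mathbf w\in\mathbb R^m$ (a function $[m]\to\mathbb R$) and $X\in\mathbf C$, $\mathbf v_X\in P$ is $\mathbf v_X(b)=\mathbf w(b(X))$; the positional voting method $B_{\mathbf w}:P\to\mathbb R^{\mathbf C}$ is $B_{\mathbf w}(\mathbf p)(X)=\mathbf p\cdot\mathbf v_X$. A profile $\mathbf p$ prefers $X$ unanimously to $Y$ if $\mathbf p(b)\ge 0$ for every ballot with $b(X)<b(Y)$, $\mathbf p(b)\le0$ for every ballot with $b(X)>b(Y)$, and $\mathbf p(b)\neq0$ for at least one ballot with $b(X)\ne b(Y)$ (no condition on ballots with $b(X)=b(Y)$). A map $F:P\to\mathbb R^{\mathbf C}$ is Pareto efficient if for every ordered pair of distinct candidates $X,Y$ and every profile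 $\mathbf p$ preferring $X$ unanimously to $Y$, $F(\mathbf p)(X)>F(\mathbf p)(Y)$. *)

From HB Require Import structures.
From mathcomp Require Import all_boot all_order all_algebra.
Unset Strict Implicit.
Set Warnings "-notation-overridden -ambiguous-paths". Unset Printing Implicit Defensive.
Import Order.TTheory GRing.Theory Num.Theory.
Local Open Scope ring_scope.

(* Positions [m] = {1,...,m} are encoded as 'I_m = {0,...,m-1}; position 1 is ord 0. *)

Definition is_ballot (C : finType) (m : nat) (lam : 'I_m -> nat)
    (b : {ffun C -> 'I_m}) : bool :=
  [forall i : 'I_m, #|[set X | b X == i]| == lam i].
Arguments is_ballot {C m} lam b.

Definition ballot (C : finType) (m : nat) (lam : 'I_m -> nat) : finType :=
  {b : {ffun C -> 'I_m} | is_ballot lam b}.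
Arguments ballot C {m} lam.

Definition profile (R : realFieldType) (C : finType) (m : nat) (lam : 'I_m -> nat) :=
  ballot C lam -> R.
Arguments profile R C {m} lam.

Definition vX (R : realFieldType) (C : finType) (m : nat) (lam : 'I_m -> nat)
    (w : 'I_m -> R) (X : C) : profile R C lam :=
  fun b => w (val b X).
Arguments vX {R C m} lam w X.

Definition pdot (R : realFieldType) (C : finType) (m : nat) (lam : 'I_m -> nat)
    (p q : profile R C lam) : R :=
  \sum_(b : ballot C lam) p b * q b.
Arguments pdot {R C m lam} p q.

Definition positional (R : realFieldType) (C : finType) (m : nat) (lam : 'I_m -> nat)
    (w : 'I_m -> R) (p : profile R C lam) : C -> R :=
  fun X => pdot p (vX lam w X).
Arguments positional {R C m} lam w p X.

Definition prefers_unanimously (R : realFieldType) (C : finType) (m : nat)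
    (lam : 'I_m -> nat) (p : profile R C lam) (X Y : C) : Prop :=
  [/\ (forall b : ballot C lam, (val b X < val b Y)%N -> 0 <= p b),
      (forall b : ballot C lam, (val b Y < val b X)%N -> p b <= 0) &
      (exists b : ballot C lam, val b X != val b Y /\ p b != 0)].
Arguments prefers_unanimously {R C m lam} p X Y.

Definition pareto_efficient (R : realFieldType) (C : finType) (m : nat)
    (lam : 'I_m -> nat) (F : profile R C lam -> C -> R) : Prop :=
  forall X Y : C, X != Y -> forall p : profile R C lam,
    prefers_unanimously p X Y -> F p Y < F p X.
Arguments pareto_efficient {R C m lam} F.

Definition strictly_decreasing (R : realFieldType) (m : nat) (w : 'I_m -> R) : Prop :=
  forall i j : 'I_m, (i < j)%N -> w j < w i.
Arguments strictly_decreasing {R m} w.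

From mathcomp Require Import all_boot all_order all_algebra all_fingroup.
Import Order.TTheory GRing.Theory Num.Theory.

Set Implicit Arguments.
Unset Strict Implicit.
Unset Printing Implicit Defensive.

(* Sufficiency: every ballot contributes [p b * (w (b X) - w (b Y))] to
   [B_w(p)(X) - B_w(p)(Y)], and unanimity together with monotonicity of [w]
   makes each contribution nonnegative and the one at a ballot where [p] is
   nonzero and separates [X] from [Y] positive.
   Necessity: for [i < j] choose a ballot [b] placing [X] at [i] and [Y] at
   [j]; the indicator profile of [b] prefers [X] unanimously to [Y], and
   [B_w] evaluates it to [w i] at [X] and [w j] at [Y]. *)

Lemma count_flatten_nseq (m : nat) (lam : 'I_m -> nat) (a : pred 'I_m) :
  count a (flatten [seq nseq (lam i) i | i <- enum 'I_m]) =
  (\sum_(i < m) a i * lam i)%N.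
Proof.
rewrite count_flatten -map_comp sumnE big_map big_enum /=.
by apply: eq_bigr => i _; rewrite /= count_nseq.
Qed.

Lemma card_nth_enum_rank (C : finType) (T : eqType) (s : seq T) (x0 k : T) :
  size s = #|C| ->
  #|[set X : C | nth x0 s (enum_rank X) == k]| = count (pred1 k) s.
Proof.
move=> size_s; rewrite cardsE -sum1_card -sum1_count (big_nth x0) big_mkord size_s.
rewrite (reindex (@enum_val C predT)) /=; last first.
  by exists (@enum_rank C) => x _; [exact: enum_valK | exact: enum_rankK].
by apply: eq_bigl => j; rewrite unfold_in /= enum_valK.
Qed.

(* Ballot filling the candidates, in the order of [enum C], with [lam i]
   copies of each position [i]; [i0] is only a default for [nth]. *)
Lemma ballot_exists (C : finType) (m : nat) (lam : 'I_m -> nat) (i0 : 'I_m) :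
  (\sum_(i < m) lam i)%N = #|C| -> exists b : {ffun C -> 'I_m}, is_ballot lam b.
Proof.
move=> sum_lam; set s := flatten [seq nseq (lam i) i | i <- enum 'I_m].
have size_s : size s = #|C|.
  by rewrite -count_predT count_flatten_nseq -sum_lam; apply: eq_bigr => i _; rewrite mul1n.
exists [ffun X => nth i0 s (enum_rank X)]; apply/forallP => k; apply/eqP.
rewrite (eq_finset (fun X => nth i0 s (enum_rank X) == k)); last by move=> X; rewrite ffunE.
rewrite card_nth_enum_rank // count_flatten_nseq (bigD1 k) //= eqxx mul1n.
by rewrite big1 ?addn0 // => i /negbTE ->.
Qed.

Lemma is_ballot_perm (C : finType) (m : nat) (lam : 'I_m -> nat)
    (b : {ffun C -> 'I_m}) (s : {perm C}) :
  is_ballot lam b -> is_ballot lam [ffun X => b (s X)].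
Proof.
move=> /forallP card_b; apply/forallP => k; apply/eqP; rewrite -(eqP (card_b k)).
rewrite !cardsE -!sum1_card [RHS](reindex_inj (@perm_inj _ s)) /=.
by apply: eq_bigl => X; rewrite !unfold_in /= ffunE.
Qed.

Lemma is_ballot_surj (C : finType) (m : nat) (lam : 'I_m -> nat)
    (b : {ffun C -> 'I_m}) (k : 'I_m) :
  is_ballot lam b -> (0 < lam k)%N -> exists X, b X = k.
Proof.
move=> /forallP /(_ k) /eqP card_k lam_k.
have : (0 < #|[set X | b X == k]|)%N by rewrite card_k.
by case/card_gt0P => X; rewrite inE => /eqP; exists X.
Qed.

(* Two transpositions move a candidate at position [i] to [X] and then a
   candidate at position [j] to [Y]; the second one fixes [X] because [i != j]. *)
Lemma ballot_placing (C : finType) (m : nat) (lam : 'I_m -> nat)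
    (b : {ffun C -> 'I_m}) (X Y : C) (i j : 'I_m) :
  is_ballot lam b -> (0 < lam i)%N -> (0 < lam j)%N -> X != Y -> i != j ->
  exists b' : {ffun C -> 'I_m}, [/\ is_ballot lam b', b' X = i & b' Y = j].
Proof.
move=> ballot_b lam_i lam_j neqXY neq_ij.
have [Xi b_Xi] := is_ballot_surj ballot_b lam_i.
pose b1 := [ffun Z => b (tperm X Xi Z)].
have ballot_b1 : is_ballot lam b1 by exact: is_ballot_perm.
have b1X : b1 X = i by rewrite ffunE tpermL.
have [Yj b1_Yj] := is_ballot_surj ballot_b1 lam_j.
have neqYjX : Yj != X by apply: contra neq_ij => /eqP eYj; rewrite -b1X -eYj b1_Yj.
exists [ffun Z => b1 (tperm Y Yj Z)]; split; first exact: is_ballot_perm.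
  by rewrite ffunE tpermD // eq_sym.
by rewrite ffunE tpermL.
Qed.

Local Open Scope ring_scope.

Definition unit_profile (R : realFieldType) (C : finType) (m : nat)
    (lam : 'I_m -> nat) (b0 : ballot C lam) : profile R C lam :=
  fun b => (b == b0)%:R.
Arguments unit_profile {R C m lam} b0.

Lemma positional_unit_profile (R : realFieldType) (C : finType) (m : nat)
    (lam : 'I_m -> nat) (w : 'I_m -> R) (b0 : ballot C lam) (X : C) :
  positional lam w (unit_profile (R := R) b0) X = w (val b0 X).
Proof.
rewrite /positional /pdot /vX (bigD1 b0) //= big1 ?addr0; first by rewrite /unit_profile eqxx mul1r.
by move=> b /negbTE nb; rewrite /unit_profile nb mul0r.
Qed.

Lemma unit_profile_prefers (R : realFieldType) (C : finType) (m : nat)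
    (lam : 'I_m -> nat) (b0 : ballot C lam) (X Y : C) :
  (val b0 X < val b0 Y)%N -> prefers_unanimously (unit_profile (R := R) b0) X Y.
Proof.
move=> ltXY; rewrite /unit_profile; split.
- by move=> b _; rewrite ler0n.
- by move=> b ltYX; case: eqP ltYX => [-> | _ _] //; rewrite ltnNge ltnW.
- by exists b0; rewrite eqxx oner_neq0 neq_ltn ltXY.
Qed.

Lemma pareto_strictly_decreasing (R : realFieldType) (m : nat) (C : finType)
    (lam : 'I_m -> nat) (w : 'I_m -> R) :
  (forall i, (0 < lam i)%N) -> (\sum_(i < m) lam i)%N = #|C| -> (2 <= #|C|)%N ->
  pareto_efficient (@positional R C m lam w) -> strictly_decreasing w.
Proof.
move=> lam_pos sum_lam card_C pareto i j lt_ij.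
have [b ballot_b] := ballot_exists i sum_lam.
have /card_gt0P [X _] : (0 < #|C|)%N by apply: leq_trans card_C.
have /card_gt0P [Y neqYX] : (0 < #|predC1 X|)%N.
  by rewrite cardC1 -ltnS prednK //; apply: leq_trans card_C.
have neqXY : X != Y by rewrite eq_sym.
have neq_ij : i != j by rewrite neq_ltn lt_ij.
have [b' [ballot_b' b'X b'Y]] :=
  ballot_placing ballot_b (lam_pos i) (lam_pos j) neqXY neq_ij.
pose b0 : ballot C lam := exist _ b' ballot_b'.
have := pareto X Y neqXY (unit_profile (R := R) b0).
rewrite !positional_unit_profile /= b'X b'Y; apply.
by apply: unit_profile_prefers; rewrite /= b'X b'Y.
Qed.

Lemma ler_mul_sign (R : realDomainType) (a u v : R) :
  (u < v -> 0 <= a) -> (v < u -> a <= 0) -> a * u <= a * v.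
Proof.
move=> pos neg; case: (ltgtP u v) => [uv|vu|->] //.
- by rewrite ler_wpM2l ?pos ?ltW.
- by rewrite ler_wnM2l ?neg ?ltW.
Qed.

Lemma ltr_mul_sign (R : realDomainType) (a u v : R) :
  (u < v -> 0 <= a) -> (v < u -> a <= 0) -> a != 0 -> u != v -> a * u < a * v.
Proof.
move=> pos neg a_neq0; case: (ltgtP u v) => [uv|vu|] // _.
- by rewrite ltr_pM2l // lt0r a_neq0 pos.
- by rewrite ltr_nM2l // lt_neqAle a_neq0 neg.
Qed.

Lemma strictly_decreasing_ltE (R : realFieldType) (m : nat) (w : 'I_m -> R) (i j : 'I_m) :
  strictly_decreasing w -> (w j < w i) = (i < j)%N.
Proof.
move=> decr_w; case: (ltngtP i j) => [ij|ji|/val_inj ->]; first exact: decr_w.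
- by apply/negbTE; rewrite -leNgt ltW ?decr_w.
- by rewrite ltxx.
Qed.

Lemma strictly_decreasing_pareto (R : realFieldType) (m : nat) (C : finType)
    (lam : 'I_m -> nat) (w : 'I_m -> R) :
  strictly_decreasing w -> pareto_efficient (@positional R C m lam w).
Proof.
move=> decr_w X Y _ p [pos neg [b0 [sep_b0 p_b0]]].
have ltE := strictly_decreasing_ltE _ _ decr_w.
have pos_p (b : ballot C lam) : w (val b Y) < w (val b X) -> 0 <= p b by rewrite ltE; apply: pos.
have neg_p (b : ballot C lam) : w (val b X) < w (val b Y) -> p b <= 0 by rewrite ltE; apply: neg.
rewrite /positional /pdot /vX (bigD1 b0) //= [X in _ < X](bigD1 b0) //=.
apply: ltr_leD; last by apply: ler_sum => b _; exact: ler_mul_sign (pos_p b) (neg_p b).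
apply: ltr_mul_sign (pos_p b0) (neg_p b0) p_b0 _; apply: contra sep_b0 => /eqP eq_w.
by rewrite -(inj_eq val_inj); case: ltngtP => // lt_b0; move: lt_b0; rewrite -ltE eq_w ltxx.
Qed.

Theorem mainTheorem9 (R : realFieldType) (n m : nat) (C : finType)
    (hn : (2 <= n)%N) (hC : #|C| = n)
    (lam : 'I_m -> nat) (hpos : forall i, (0 < lam i)%N)
    (hsum : (\sum_(i < m) lam i)%N = n)
    (w : 'I_m -> R) :
  pareto_efficient (@positional R C m lam w) <-> strictly_decreasing w.
Proof.
split; last exact: strictly_decreasing_pareto.
by apply: pareto_strictly_decreasing; rewrite ?hC.
Qed.
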